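(* Let $S_0,S_1\subseteq\mathbb Z_{\ge 0}$ with $0\in S_0$ and $1\in S_1$. Assume there is a positive integer $n$ such that for all $a\in S_0$ and all $b_1,\dots,b_n\in S_1$ (not necessarily distinct), $b_1+\cdots+b_n\in S_0$ and $a+b_1+\cdots+b_{n-1}\in S_1$. If $n$ is odd, then there is a nonnegative integer $A(n)$, depending only on $n$, with $A(n)\in S_0\cap S_1$. If $n$ is even, then there is a nonnegative integer $d(n)$, depending only on $n$, such that $S_0$ contains all even integers at least $d(n)$ and $S_1$ contains all odd integers at least $d(n)$. *)

From mathcomp Require Import all_boot.
Set Implicit Arguments. Unset Strict Implicit. Unset Printing Implicit Defensive.

Definition closure_hyp (n : nat) (S0 S1 : nat -> Prop) : Prop :=
  (forall b : 'I_n -> nat, (forall i, S1 (b i)) -> S0 (\sum_(i < n) b i)) /\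
  (forall (a : nat) (b : 'I_n.-1 -> nat), S0 a -> (forall i, S1 (b i)) ->
     S1 (a + \sum_(i < n.-1) b i)).

From mathcomp Require Import all_boot.
From mathcomp Require Import zify.
Set Implicit Arguments.

(* Choosing all [b_i = 1] except at most one gives three moves: [S0 -> S1]
   adding [n - 1], [S1 -> S0] adding [n - 1], and (with [a = 0]) [S1 -> S1]
   adding [n - 2].  For odd [n = 2h + 1], [h] round trips from [0] put
   [(n-1)^2 = h * 2(n-1)] in [S0], and [n - 1] uses of the third move from
   [n - 1] put [(n-1) + (n-1)(n-2) = (n-1)^2] in [S1].  For even [n = 2h + 2],
   [S1] is closed under adding [2h] and [2(2h+1)]; as [h] and [2h+1] are
   coprime, every large odd number lies in [S1], hence every large even number
   lies in [S0]. *)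

Lemma shift_closed_muln {P : nat -> Prop} {s : nat}
    (Ps : forall x, P x -> P (x + s)) (k : nat) {x : nat} :
  P x -> P (x + k * s).
Proof.
elim: k x => [x Px|k IHk x Px]; first by rewrite addn0.
by rewrite mulSn addnA; apply/IHk/Ps.
Qed.

Lemma sum_ones (k : nat) : \sum_(i < k) 1 = k.
Proof. by rewrite sum_nat_const card_ord muln1. Qed.

Lemma sum_head_ones (k x : nat) :
  \sum_(i < k.+1) (if nat_of_ord i == 0 then x else 1) = x + k.
Proof. by rewrite big_ord_recl /= sum_ones. Qed.

Lemma lin_comb_ch1_h (c h N : nat) :
  c * h * h <= N -> exists j k, N = j * (c * h + 1) + k * h.
Proof.
case: h => [|h] hN; first by exists N, 0; lia.
exists (N %% h.+1), (N %/ h.+1 - c * (N %% h.+1)).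
have r_lt := ltn_pmod N (ltn0Sn h).
have q_ge : c * h.+1 <= N %/ h.+1 by rewrite leq_divRL //; lia.
move: (divn_eq N h.+1) r_lt q_ge; set q := N %/ h.+1; set r := N %% h.+1.
nia.
Qed.

Lemma even_gt0E {n : nat} : 0 < n -> ~~ odd n -> exists h, n = h.*2.+2.
Proof.
move=> n_gt0 n_even; exists n.-2./2.
by rewrite -[LHS]odd_double_half (negbTE n_even); lia.
Qed.

Section Moves.

Variables (n : nat) (S0 S1 : nat -> Prop).
Hypothesis hyp : closure_hyp n S0 S1.
Hypotheses (S0_0 : S0 0) (S1_1 : S1 1) (n_gt0 : 0 < n).

Lemma S1_addn_pred a : S0 a -> S1 (a + n.-1).
Proof. by move=> S0a; have := hyp.2 a (fun _ => 1) S0a (fun _ => S1_1); rewrite sum_ones. Qed.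

Lemma S0_addn_pred x : S1 x -> S0 (x + n.-1).
Proof.
move=> S1x; case: n n_gt0 hyp => // m _ [hyp0 _] /=.
rewrite -sum_head_ones; apply: hyp0 => i; by case: ifP.
Qed.

Lemma S1_addn_pred2 x : S1 x -> S1 (x + n.-2).
Proof.
case: n hyp => [|[|m]] [_ hyp1] S1x; rewrite /= ?addn0 //.
rewrite -[x + _]add0n -(sum_head_ones m x).
by apply: (hyp1 0 (fun i => if nat_of_ord i == 0 then x else 1)) => // i; case: ifP.
Qed.

Lemma S0_addn_round a : S0 a -> S0 (a + 2 * n.-1).
Proof. by move=> /S1_addn_pred/S0_addn_pred; rewrite -addnA addnn -mul2n. Qed.

Lemma S1_addn_round x : S1 x -> S1 (x + 2 * n.-1).
Proof. by move=> /S0_addn_pred/S1_addn_pred; rewrite -addnA addnn -mul2n. Qed.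

Lemma S1_large_odd x : ~~ odd n -> n.-2 * n.-2 < x -> odd x -> S1 x.
Proof.
move=> n_even x_gt x_odd; have [h n_eq] := even_gt0E n_gt0 n_even.
rewrite n_eq /= in x_gt.
have [j [k x_half_eq]] := @lin_comb_ch1_h 2 h x./2 ltac:(lia).
have := shift_closed_muln S1_addn_round j
          (shift_closed_muln S1_addn_pred2 k S1_1).
by congr S1; rewrite -[RHS]odd_double_half x_odd x_half_eq n_eq; lia.
Qed.

Lemma S0_large_even m : ~~ odd n -> n * n <= m -> ~~ odd m -> S0 m.
Proof.
move=> n_even m_ge m_even; have [h n_eq] := even_gt0E n_gt0 n_even.
rewrite n_eq in m_ge.
have -> : m = (m - n.-1) + n.-1 by rewrite n_eq; lia.
apply/S0_addn_pred/S1_large_odd; rewrite // n_eq /=; first nia.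
by rewrite oddB ?(negbTE m_even) ?odd_double //; lia.
Qed.

End Moves.

Theorem lemma4p8 (n : nat) (hn : 0 < n) :
  (odd n -> exists A : nat, forall S0 S1 : nat -> Prop,
      S0 0 -> S1 1 -> closure_hyp n S0 S1 -> S0 A /\ S1 A) /\
  (~~ odd n -> exists d : nat, forall S0 S1 : nat -> Prop,
      S0 0 -> S1 1 -> closure_hyp n S0 S1 ->
      (forall m, d <= m -> ~~ odd m -> S0 m) /\
      (forall m, d <= m -> odd m -> S1 m)).
Proof.
split=> [n_odd | n_even].
  exists (n.-1 * n.-1) => S0 S1 S0_0 S1_1 hyp.
  have [h n_eq] : exists h, n = h.*2.+1.
    by exists n./2; rewrite -[LHS]odd_double_half n_odd.
  split.
    have := shift_closed_muln (S0_addn_round hyp S1_1 hn) h S0_0.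
    by congr S0; rewrite n_eq /=; lia.
  have := shift_closed_muln (S1_addn_pred2 hyp S0_0 S1_1) n.-1
            (S1_addn_pred hyp S1_1 _ S0_0).
  by congr S1; rewrite n_eq /=; nia.
exists (n * n) => S0 S1 S0_0 S1_1 hyp; split=> m m_ge m_par.
  exact: (S0_large_even hyp S0_0 S1_1 hn).
by apply: (S1_large_odd hyp S0_0 S1_1) => //; lia.
Qed.
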